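(* Let $G$ satisfy conditions (1)–(5) below and let $C_G\subset\mathbb{P}^{d-g}$ be defined by an admissible labeling of $\tilde G$ (see context), with homogeneous ideal $I_{C_G}=\bigcap_v I_v$. Let $\alpha\neq\beta$ be two distinct edge labels. Then $\ell(\alpha)\ell(\beta)\in I_{C_G}$ if and only if the indices appearing in $\alpha$ and the indices appearing in $\beta$ are not adjacent. More precisely, for distinct indices: (1) $x_ix_j\in I_{C_G}$ unless there is a vertex $v$ having incident edges labeled $e_i$ and $e_j$, or a vertex $v$ having incident edges labeled $e_a$ and $e_b-e_c$ with $\{a,b,c\}=\{i,j,k\}$ for some index $k$; (2) if $e_j-e_k$ is an edge label and $i\notin\{j,k\}$, then $x_i(x_j-x_k)\in I_{C_G}$ unless there is a vertex $v$ having incident edges labeled $e_i$ and $e_j$, or a vertex $v$ having incident edges labeled $e_i$ and $e_k$; (3) if $e_i-e_j$ and $e_k-e_l$ are two distinct edge labels, then $(x_i-x_j)(x_k-x_l)\in I_{C_G}$.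
   Context: Work over an algebraically closed field $k$ of characteristic zero, $S=k[x_0,\ldots,x_{d-g}]$. Conditions on the finite graph $G=(V,E)$, $d=|V|$, $g=|E|-d+1$: (1) connected; (2) simple; (3) every vertex has degree at most $3$ and some vertex has degree less than $3$; (4) the shortest path between any two distinct vertices of degree $3$ has at least $3$ edges; (5) no triangles. Let $\tilde G$ be obtained from $G$ by attaching one loop at each vertex of degree $1$. An admissible labeling of the edges of $\tilde G$: for each vertex of degree $3$ choose two indices $j\neq k$ in $\{0,\ldots,d-g\}$ and label its three edges $e_j,e_k,e_j-e_k$; label each remaining edge $e_i$ with an unused index, distinct indices being used throughout. An index $i$ appears on an edge if the edge is labeled $e_i$ or $\pm(e_i-e_j)$; indices $i$ and $j$ are adjacent if they appear on adjacent edges (distinct edges of $\tilde G$ sharing a vertex). For each vertex $v$: if $v$ has degree $3$ with edges $e_j,e_k,e_j-e_k$, $I_v=(x_i: i\neq j,k)$; otherwise $I_v$ is generated by the $x_i$ with $i$ not appearing on an edge of $\tilde G$ at $v$, together with $x_j-x_k$ if some edge at $v$ is labeled $e_j-e_k$. $L_v=V(I_v)$, $C_G=\bigcup_v L_v$. For an edge label $\alpha$, $\ell(\alpha)=x_i$ if $\alpha=e_i$ and $\ell(\alpha)=x_i-x_j$ if $\alpha=e_i-e_j$. *)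

From HB Require Import structures.
From mathcomp Require Import all_boot all_order all_algebra.
From mathcomp Require Import mpoly.
Set Implicit Arguments. Unset Strict Implicit. Unset Printing Implicit Defensive.
Import GRing.Theory.
Local Open Scope ring_scope.

(* Edges of G are encoded as 2-element vertex sets [set u; w];         *)
(* the loop of G~ attached at a degree-1 vertex v is encoded as [set v]*)
Section Graph.
Variables (V : finType) (adj : rel V).

Definition deg (v : V) : nat := #|[set u | adj v u]|.

Definition gedges : {set {set V}} :=
  [set e | [exists u, exists w, adj u w && (e == [set u; w])]].

Definition genus : nat := (#|gedges| + 1 - #|V|)%N.

Definition tedges : {set {set V}} :=
  gedges :|: [set [set v] | v in [set v | deg v == 1%N]].

Definition edges_at (v : V) : {set {set V}} := [set e in tedges | v \in e].

Definition simple_graph : Prop := ssrbool.symmetric adj /\ irreflexive adj.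
Definition connected_graph : Prop := forall u v, connect adj u v.
Definition degree_condition : Prop :=
  (forall v, (deg v <= 3)%N) /\ (exists v, (deg v < 3)%N).
Definition deg3_far_apart : Prop :=
  forall u v, u != v -> deg u = 3%N -> deg v = 3%N ->
    ~~ adj u v /\ ~~ [exists w, adj u w && adj w v].
Definition triangle_free : Prop :=
  forall a b c, ~~ [&& adj a b, adj b c & adj c a].

(* Labels with indices in 'I_m: inl i is e_i, inr (j, k) is e_j - e_k. *)
Definition label (m : nat) := ('I_m + 'I_m * 'I_m)%type.

Definition lab_idx m (l : label m) : {set 'I_m} :=
  match l with inl i => [set i] | inr (j, k) => [set j; k] end.

Definition admissible m (lab : {set V} -> label m) : Prop :=
  (forall v, deg v = 3%N -> exists j k : 'I_m, j != k /\
       [set lab e | e in edges_at v] = [set inl j; inl k; inr (j, k)]) /\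
  (forall e, e \in tedges -> (forall v, v \in e -> deg v != 3%N) ->
       exists i, lab e = inl i) /\
  (* distinct indices used throughout: two distinct edges sharing an index
     are both among the edges of one degree-3 vertex *)
  (forall e f, e \in tedges -> f \in tedges -> e != f ->
       ~~ [disjoint lab_idx (lab e) & lab_idx (lab f)] ->
       exists v, deg v = 3%N /\ v \in e /\ v \in f).

Definition appears_at m (lab : {set V} -> label m) (v : V) : {set 'I_m} :=
  \bigcup_(e in edges_at v) lab_idx (lab e).

Definition is_diff m (l : label m) : bool := if l is inr _ then true else false.

Section Poly.
Variable (k : fieldType).

Definition ell m (l : label m) : {mpoly k[m]} :=
  match l with inl i => 'X_i | inr (i, j) => 'X_i - 'X_j end.

(* generators of I_v. For a degree-3 vertex with edges e_j, e_k, e_j - e_k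
   the indices appearing at v are exactly j, k, so the first part is
   (x_i : i <> j, k). *)
Definition Iv_gens m (lab : {set V} -> label m) (v : V) : seq {mpoly k[m]} :=
  [seq 'X_i | i <- enum (~: appears_at lab v)] ++
  (if deg v == 3%N then [::]
   else [seq ell (lab e) | e <- enum (edges_at v) & is_diff (lab e)]).

End Poly.
End Graph.

Definition in_ideal (R : comNzRingType) (gs : seq R) (p : R) : Prop :=
  exists cs : seq R, p = \sum_(i < size gs) cs`_i * gs`_i.

Definition in_ICG (k : fieldType) (V : finType) (adj : rel V) m
    (lab : {set V} -> label m) (p : {mpoly k[m]}) : Prop :=
  forall v : V, in_ideal (Iv_gens adj k lab v) p.
Arguments in_ICG k {V} adj {m} lab p.

From Pilot Require Import Defs.
From HB Require Import structures.
From mathcomp Require Import all_boot all_order all_algebra.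
From mathcomp Require Import mpoly.
Set Implicit Arguments. Unset Strict Implicit. Unset Printing Implicit Defensive.
Import GRing.Theory.
Local Open Scope ring_scope.

(* Every generator of I_v vanishes at the 0/1 point of L_v whose coordinates
   are 1 exactly on the indices appearing at v.  Evaluating there shows that
   x_i x_j is not in I_v when i and j both appear at v, and that
   x_i (x_j - x_l) is not in I_v when i and exactly one of j, l appear at v;
   in the remaining cases one factor is itself in I_v.  The combinatorial
   heart is that the indices of a degree-3 vertex w can only appear at w and
   at its neighbours, and a neighbour u of w carries them only on the edge uw:
   this follows from the distinctness of indices, together with the facts
   that degree-3 vertices are neither adjacent nor have a common neighbour. *)

Section IdealMembership.
Variable R : comNzRingType.
Implicit Types (gs : seq R) (p q : R).

Lemma in_idealD gs p q : in_ideal gs p -> in_ideal gs q -> in_ideal gs (p + q).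
Proof.
move=> [c1 ->] [c2 ->]; exists (mkseq (fun i => c1`_i + c2`_i) (size gs)).
by rewrite -big_split; apply: eq_bigr => i _; rewrite nth_mkseq // mulrDl.
Qed.

Lemma in_idealMl gs p q : in_ideal gs p -> in_ideal gs (q * p).
Proof.
move=> [c ->]; exists (mkseq (fun i => q * c`_i) (size gs)).
by rewrite mulr_sumr; apply: eq_bigr => i _; rewrite nth_mkseq // mulrA.
Qed.

Lemma in_idealMr gs p q : in_ideal gs p -> in_ideal gs (p * q).
Proof. by rewrite mulrC; apply: in_idealMl. Qed.

Lemma in_idealB gs p q : in_ideal gs p -> in_ideal gs q -> in_ideal gs (p - q).
Proof. by move=> Ip Iq; rewrite -mulN1r in Iq *; apply/in_idealD/in_idealMl. Qed.

Lemma in_ideal_mem gs g : g \in gs -> in_ideal gs g.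
Proof.
move=> gs_g; have lt_g : (index g gs < size gs)%N by rewrite index_mem.
exists (mkseq (fun i => (i == index g gs)%:R) (size gs)).
rewrite (bigD1 (Ordinal lt_g)) //= big1 => [|i ne_i].
  by rewrite nth_mkseq // eqxx mul1r nth_index // addr0.
rewrite nth_mkseq // (_ : _ == _ = false) ?mul0r //.
by apply/negbTE; apply: contra ne_i => /eqP eq_i; apply/eqP/val_inj.
Qed.

End IdealMembership.

Lemma in_ideal_meval0 (R : comNzRingType) m (gs : seq {mpoly R[m]}) p
    (z : 'I_m -> R) :
  in_ideal gs p -> (forall g, g \in gs -> g.@[z] = 0) -> p.@[z] = 0.
Proof.
move=> [c ->] gs_z0; apply: (big_ind (fun q : {mpoly R[m]} => q.@[z] = 0)).
- by rewrite meval0.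
- by move=> q1 q2 z1 z2; rewrite mevalD z1 z2 addr0.
- by move=> i _; rewrite mevalM [(gs`_i).@[z]]gs_z0 ?mulr0 // mem_nth.
Qed.

Section AdmissibleLabeling.
Variables (k : fieldType) (V : finType) (adj : rel V) (m : nat)
  (lab : {set V} -> label m).
Hypothesis adj_simple : simple_graph adj.
Hypothesis deg3_far : deg3_far_apart adj.
Hypothesis deg_cond : degree_condition adj.
Hypothesis lab_adm : admissible adj lab.

Local Notation deg := (deg adj).
Local Notation A := (appears_at adj lab).
Local Notation labels_at v := [set lab e | e in edges_at adj v].
Local Notation in_Iv v := (in_ideal (Iv_gens adj k lab v)).

Lemma adj_sym u w : adj u w = adj w u.
Proof. exact: adj_simple.1. Qed.

Lemma edges_atE v e : (e \in edges_at adj v) = (e \in tedges adj) && (v \in e).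
Proof. by rewrite inE. Qed.

Lemma adj_tedge u w : adj u w -> [set u; w] \in tedges adj.
Proof.
move=> uw; rewrite inE; apply/orP; left; rewrite inE.
by apply/existsP; exists u; apply/existsP; exists w; rewrite uw eqxx.
Qed.

Lemma adj_edges_at u w : adj u w -> [set u; w] \in edges_at adj u.
Proof. by move=> uw; rewrite edges_atE adj_tedge // !inE eqxx. Qed.

Lemma tedge_pair e u w : e \in tedges adj -> u \in e -> w \in e -> u != w ->
  adj u w /\ e = [set u; w].
Proof.
rewrite inE => /orP[|/imsetP[v _ ->]]; last by rewrite !inE => /eqP-> /eqP->/eqP.
rewrite inE => /existsP[a /existsP[b /andP[ab /eqP->]]].
rewrite !inE => /orP[]/eqP-> /orP[]/eqP->; rewrite ?eqxx // => _.
by rewrite adj_sym setUC.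
Qed.

Lemma deg3_nonadj u w : deg u = 3%N -> deg w = 3%N -> ~~ adj u w.
Proof.
move=> du dw; have [<-|neq_uw] := eqVneq u w; first by rewrite adj_simple.2.
by case: (deg3_far neq_uw du dw).
Qed.

Lemma deg3_nbr_uniq u w w' :
  adj u w -> adj u w' -> deg w = 3%N -> deg w' = 3%N -> w = w'.
Proof.
move=> uw uw' dw dw'; apply/eqP/negP => /negP neq_ww'.
have [_ /existsP[]] := deg3_far neq_ww' dw dw'.
by exists u; rewrite adj_sym uw uw'.
Qed.

Lemma deg3_close_uniq u w w' : deg w = 3%N -> deg w' = 3%N ->
  u = w \/ adj u w -> u = w' \/ adj u w' -> w = w'.
Proof.
move=> dw dw' [->|uw] [eq_ww'|uw'] //.
- by rewrite (negbTE (deg3_nonadj dw dw')) in uw'.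
- by rewrite eq_ww' (negbTE (deg3_nonadj dw' dw)) in uw.
- exact: deg3_nbr_uniq uw uw' dw dw'.
Qed.

Lemma diff_label_deg3 e b c : e \in tedges adj -> lab e = inr (b, c) ->
  exists w, [/\ deg w = 3%N, w \in e, b != c &
                labels_at w = [set inl b; inl c; inr (b, c)]].
Proof.
case: lab_adm => lab3 [lab_other _] te lab_e.
have [/existsP[w /andP[we /eqP dw]]|no3] := boolP [exists w in e, deg w == 3%N].
  have [j [l [neq_jl labels_w]]] := lab3 w dw.
  have : lab e \in labels_at w by apply: imset_f; rewrite edges_atE te.
  by rewrite labels_w lab_e !inE /= => /eqP[-> ->]; exists w.
have [i] : exists i, lab e = inl i; last by rewrite lab_e.
apply: lab_other => // v ve; apply: contra no3 => /eqP dv.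
by apply/existsP; exists v; rewrite ve dv.
Qed.

Lemma diff_edge_nondeg3 u e b c : deg u != 3%N -> e \in edges_at adj u ->
  lab e = inr (b, c) ->
  exists w, [/\ adj u w, deg w = 3%N, e = [set u; w] &
                labels_at w = [set inl b; inl c; inr (b, c)]].
Proof.
move=> du; rewrite edges_atE => /andP[te e_u] lab_e.
have [w [dw e_w _ labels_w]] := diff_label_deg3 te lab_e.
have neq_uw : u != w by apply: contraNneq du => ->; rewrite dw.
by have [uw ->] := tedge_pair te e_u e_w neq_uw; exists w.
Qed.

Lemma diff_edge_nondeg3_uniq u e f b c b' c' : deg u != 3%N ->
  e \in edges_at adj u -> f \in edges_at adj u ->
  lab e = inr (b, c) -> lab f = inr (b', c') -> e = f.
Proof.
move=> du ue uf lab_e lab_f.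
have [w [uw dw -> _]] := diff_edge_nondeg3 du ue lab_e.
have [w' [uw' dw' -> _]] := diff_edge_nondeg3 du uf lab_f.
by rewrite (deg3_nbr_uniq uw uw' dw dw').
Qed.

(* A vertex u next to a degree-3 vertex w has degree 1 or 2; its loop, or its
   edge not leading to w, avoids degree-3 vertices and so is labeled [e_a]. *)
Lemma nbr_deg3_inl_edge u w : deg u != 3%N -> adj u w -> deg w = 3%N ->
  exists a, exists2 g, g \in edges_at adj u & lab g = inl a.
Proof.
move=> du uw dw; case: lab_adm => _ [lab_other _].
suff [g ug no3] : exists2 g, g \in edges_at adj u & forall y, y \in g -> deg y != 3%N.
  move: (ug); rewrite edges_atE => /andP[tg _].
  by have [a] := lab_other g tg no3; exists a, g.
have nbr_w : w \in [set y | adj u y] by rewrite inE.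
have deg_pos : (0 < deg u)%N by rewrite card_gt0; apply/set0Pn; exists w.
have [du1|du2] : deg u = 1%N \/ deg u = 2%N.
  by move: du deg_pos (deg_cond.1 u); case: (deg u) => [|[|[|[|]]]]; auto.
- exists [set u]; last by move=> y /set1P ->; rewrite du.
  rewrite edges_atE set11 andbT inE; apply/orP; right.
  by apply: imset_f; rewrite inE du1.
- have : (0 < #|[set y | adj u y] :\ w|)%N.
    by move: du2; rewrite /Defs.deg (cardsD1 w) nbr_w add1n => -[->].
  rewrite card_gt0 => /set0Pn[x]; rewrite !inE => /andP[neq_xw ux].
  exists [set u; x]; first exact: adj_edges_at.
  move=> y /set2P[->|->]; first by rewrite du.
  by apply: contra neq_xw => /eqP dx; rewrite (deg3_nbr_uniq ux uw dx dw).
Qed.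

Lemma mem_appears_at v e t :
  e \in edges_at adj v -> t \in lab_idx (lab e) -> t \in A v.
Proof. by move=> ve t_e; apply/bigcupP; exists e. Qed.

Lemma X_Iv_gens v i : i \notin A v -> ('X_i : {mpoly k[m]}) \in Iv_gens adj k lab v.
Proof. by move=> i_v; rewrite mem_cat (map_f (fun i => 'X_i)) // mem_enum inE. Qed.

Lemma diff_Iv_gens v e b c : deg v != 3%N -> e \in edges_at adj v ->
  lab e = inr (b, c) -> ('X_b - 'X_c : {mpoly k[m]}) \in Iv_gens adj k lab v.
Proof.
move=> dv ve lab_e; rewrite /Iv_gens mem_cat (negbTE dv) orbC.
by apply/orP; left; apply/mapP; exists e; rewrite ?lab_e // mem_filter lab_e mem_enum ve.
Qed.

Lemma X_in_Iv v i : i \notin A v -> in_Iv v 'X_i.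
Proof. by move=> i_v; apply/in_ideal_mem/X_Iv_gens. Qed.

Lemma diff_in_Iv v b c : b \notin A v -> c \notin A v -> in_Iv v ('X_b - 'X_c).
Proof. by move=> b_v c_v; apply: in_idealB; apply: X_in_Iv. Qed.

Definition appears_pt v : 'I_m -> k := fun i => (i \in A v)%:R.

Lemma in_Iv_meval0 v p : in_Iv v p -> p.@[appears_pt v] = 0.
Proof.
move/in_ideal_meval0; apply=> g; rewrite mem_cat => /orP[/mapP[i]|].
  by rewrite mem_enum inE => /negbTE i_v ->; rewrite mevalXU /appears_pt i_v.
case: ifP => // _ /mapP[e]; rewrite mem_filter mem_enum => /andP[+ ve] ->.
case lab_e: (lab e) => [//|[b c]] _ /=.
have idx_v t : t \in [set b; c] -> t \in A v.
  by move=> t_bc; apply: mem_appears_at ve _; rewrite lab_e.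
by rewrite mevalB !mevalXU /appears_pt !idx_v ?subrr // !inE eqxx ?orbT.
Qed.

Lemma XX_in_Iv v i j : in_Iv v ('X_i * 'X_j) <-> ~ (i \in A v /\ j \in A v).
Proof.
split=> [/in_Iv_meval0 | not_ij].
  rewrite mevalM !mevalXU /appears_pt /= => + [i_v j_v].
  by rewrite i_v j_v mulr1 => /eqP; rewrite oner_eq0.
have [i_v|/X_in_Iv] := boolP (i \in A v); last exact: in_idealMr.
have [j_v|/X_in_Iv] := boolP (j \in A v); last exact: in_idealMl.
by case: not_ij.
Qed.

Lemma X_diff_in_Iv_appears v i j l :
  in_Iv v ('X_i * ('X_j - 'X_l)) -> i \in A v -> (j \in A v) = (l \in A v).
Proof.
move/in_Iv_meval0; rewrite mevalM mevalB !mevalXU /appears_pt /= => val0 i_v.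
move: val0; rewrite i_v mul1r.
by case: (j \in A v); case: (l \in A v); rewrite ?subrr ?subr0 ?sub0r // => /eqP;
  rewrite ?oppr_eq0 oner_eq0.
Qed.

Section Deg3Vertex.
Variables (v : V) (j l : 'I_m).
Hypothesis v_deg3 : deg v = 3%N.
Hypothesis v_labels : labels_at v = [set inl j; inl l; inr (j, l)].

Lemma appears_at_deg3 t : t \in A v -> t \in [set j; l].
Proof.
case/bigcupP => e ve t_e; have : lab e \in labels_at v by apply: imset_f.
rewrite v_labels !inE => /orP[/orP[]|] /eqP lab_e; move: t_e; rewrite lab_e /=;
  by rewrite !inE => ->; rewrite ?orbT.
Qed.

Lemma deg3_inl_edge t : t \in [set j; l] ->
  exists2 e, e \in edges_at adj v & lab e = inl t.
Proof.
move=> t_jl; have : inl t \in labels_at v.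
  by rewrite v_labels !inE; case/set2P: t_jl => ->; rewrite eqxx ?orbT.
by case/imsetP=> e ve ->; exists e.
Qed.

(* The edge at v labeled [e_t] shares the index t with g, so by distinctness of
   indices the two edges meet at a degree-3 vertex, which can only be v. *)
Lemma deg3_index_edge g t : g \in tedges adj -> t \in lab_idx (lab g) ->
  t \in [set j; l] -> v \in g.
Proof.
case: lab_adm => _ [_ distinct_idx] tg t_g t_jl.
have [e ve lab_e] := deg3_inl_edge t_jl; move: (ve); rewrite edges_atE.
case/andP=> te e_v; have [->|neq_ge] := eqVneq g e; first by [].
have share_t : ~~ [disjoint lab_idx (lab g) & lab_idx (lab e)].
  by apply/negP => /disjointFr/(_ t_g); rewrite lab_e /= inE eqxx.
have [w [dw [w_g w_e]]] := distinct_idx g e tg te neq_ge share_t.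
have [->|neq_vw] := eqVneq v w; first by [].
have [vw _] := tedge_pair te e_v w_e neq_vw.
by rewrite (negbTE (deg3_nonadj v_deg3 dw)) in vw.
Qed.

Lemma deg3_index_edge_at u g t : u != v -> g \in edges_at adj u ->
  t \in lab_idx (lab g) -> t \in [set j; l] -> adj u v /\ g = [set u; v].
Proof.
move=> neq_uv; rewrite edges_atE => /andP[tg g_u] t_g t_jl.
exact: tedge_pair tg g_u (deg3_index_edge tg t_g t_jl) neq_uv.
Qed.

Lemma deg3_index_near u : (j \in A u) || (l \in A u) -> u = v \/ adj u v.
Proof.
have [->|neq_uv] := eqVneq u v; [by left | move=> jl_u; right].
have [t t_jl t_u] : exists2 t, t \in [set j; l] & t \in A u.
  by case/orP: jl_u => ?; [exists j | exists l]; rewrite ?inE ?eqxx ?orbT.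
have [g ug t_g] := bigcupP t_u.
by have [] := deg3_index_edge_at neq_uv ug t_g t_jl.
Qed.

(* At a neighbour u, both indices of v could only sit on the single edge uv. *)
Lemma inl_index_excludes u f t s : u != v -> f \in edges_at adj u ->
  lab f = inl t -> t \in [set j; l] -> s \in [set j; l] -> s != t -> s \notin A u.
Proof.
move=> neq_uv uf lab_f t_jl s_jl neq_st; apply/bigcupP => -[g ug s_g].
have t_f : t \in lab_idx (lab f) by rewrite lab_f inE.
have [_ eq_g] := deg3_index_edge_at neq_uv ug s_g s_jl.
have [_ eq_f] := deg3_index_edge_at neq_uv uf t_f t_jl.
by move: s_g; rewrite eq_g -eq_f lab_f inE (negbTE neq_st).
Qed.

Lemma index_inl_edge u i : deg u != 3%N -> adj u v ->
  i \in A u -> i \notin [set j; l] -> exists2 h, h \in edges_at adj u & lab h = inl i.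
Proof.
move=> du uv /bigcupP[h uh i_h] i_jl.
case lab_h: (lab h) i_h => [a|[b c]] /= i_h.
  by move: i_h; rewrite inE => /eqP->; exists h.
have [w [uw dw eq_h _]] := diff_edge_nondeg3 du uh lab_h.
case/negP: i_jl; apply: appears_at_deg3.
apply: (mem_appears_at (e := h)); last by rewrite lab_h.
by rewrite edges_atE eq_h (deg3_nbr_uniq uw uv dw v_deg3) adj_tedge // !inE eqxx orbT.
Qed.

Section ThirdIndex.
Variable i : 'I_m.
Hypothesis i_jl : i \notin [set j; l].

Definition inl_adjacent : Prop :=
  exists u e f, e \in edges_at adj u /\ f \in edges_at adj u /\
    lab e = inl i /\ (lab f = inl j \/ lab f = inl l).

Lemma diff_in_Iv_nbr u t : ~ inl_adjacent ->
  t \in [set j; l] -> t \in A u -> i \in A u -> in_Iv u ('X_j - 'X_l).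
Proof.
move=> not_adj t_jl t_u i_u.
have neq_uv : u != v.
  by apply: contraNneq i_jl => eq_uv; apply: appears_at_deg3; rewrite -eq_uv.
have [g ug t_g] := bigcupP t_u; have [uv _] := deg3_index_edge_at neq_uv ug t_g t_jl.
have du : deg u != 3%N by apply: contraTneq uv => du; apply: deg3_nonadj.
have : lab [set u; v] \in labels_at v.
  by apply: imset_f; rewrite edges_atE adj_tedge // !inE eqxx orbT.
have [h uh lab_h] := index_inl_edge du uv i_u i_jl.
rewrite v_labels !inE => /orP[/orP[]|] /eqP lab_uv;
  last exact/in_ideal_mem/(diff_Iv_gens du (adj_edges_at uv) lab_uv).
all: by case: not_adj; exists u, h, [set u; v]; rewrite lab_uv adj_edges_at; auto.
Qed.

Lemma X_diff_in_Iv u : ~ inl_adjacent -> in_Iv u ('X_i * ('X_j - 'X_l)).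
Proof.
move=> not_adj; have [i_u|/X_in_Iv] := boolP (i \in A u); last exact: in_idealMr.
apply: in_idealMl; have [j_u|j_u] := boolP (j \in A u).
  by apply: (diff_in_Iv_nbr not_adj _ j_u i_u); rewrite !inE eqxx.
have [l_u|l_u] := boolP (l \in A u); last exact: diff_in_Iv.
by apply: (diff_in_Iv_nbr not_adj _ l_u i_u); rewrite !inE eqxx orbT.
Qed.

Lemma inl_adjacent_X_diff_notin : j != l -> inl_adjacent ->
  exists u, ~ in_Iv u ('X_i * ('X_j - 'X_l)).
Proof.
move=> neq_jl [u [e [f [ue [uf [lab_e lab_f]]]]]]; exists u.
have neq_uv : u != v.
  apply: contraNneq i_jl => eq_uv.
  have : lab e \in labels_at v by rewrite -eq_uv; apply: imset_f.
  by rewrite v_labels lab_e !inE => /orP[/orP[]|] /eqP[] // ->; rewrite eqxx ?orbT.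
have i_u : i \in A u by apply: mem_appears_at ue _; rewrite lab_e inE.
have j_jl : j \in [set j; l] by rewrite !inE eqxx.
have l_jl : l \in [set j; l] by rewrite !inE eqxx orbT.
move/X_diff_in_Iv_appears/(_ i_u); case: lab_f => lab_f.
  have j_u : j \in A u by apply: mem_appears_at uf _; rewrite lab_f inE.
  by rewrite j_u (negbTE (inl_index_excludes neq_uv uf lab_f j_jl l_jl _)) // eq_sym.
have l_u : l \in A u by apply: mem_appears_at uf _; rewrite lab_f inE.
by rewrite l_u (negbTE (inl_index_excludes neq_uv uf lab_f l_jl j_jl neq_jl)).
Qed.

Lemma X_diff_in_ICG : j != l ->
  (forall u, in_Iv u ('X_i * ('X_j - 'X_l))) <-> ~ inl_adjacent.
Proof.
move=> neq_jl; split=> [inI adj_ijl | not_adj u]; last exact: X_diff_in_Iv.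
by have [u] := inl_adjacent_X_diff_notin neq_jl adj_ijl; apply; apply: inI.
Qed.

End ThirdIndex.
End Deg3Vertex.

Definition adjacent_idx (i j : 'I_m) : Prop :=
  (exists v e f, e \in edges_at adj v /\ f \in edges_at adj v /\
     lab e = inl i /\ lab f = inl j) \/
  (exists v e f (a b c l : 'I_m), e \in edges_at adj v /\ f \in edges_at adj v /\
     lab e = inl a /\ lab f = inr (b, c) /\ [set a; b; c] = [set i; j; l]).

Lemma adjacent_idxC i j : adjacent_idx i j -> adjacent_idx j i.
Proof.
case=> [[v [e [f [ve [vf [lab_e lab_f]]]]]]|[v [e [f [a [b [c [l abc]]]]]]]].
  by left; exists v, f, e.
by right; exists v, e, f, a, b, c, l; rewrite -setUA (setUC [set j]) setUA; case: abc.
Qed.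

Lemma adjacent_idx_appears i j : adjacent_idx i j -> exists v, i \in A v /\ j \in A v.
Proof.
case=> [[v [e [f [ve [vf [lab_e lab_f]]]]]]|].
  by exists v; split; [apply: mem_appears_at ve _ | apply: mem_appears_at vf _];
    rewrite ?lab_e ?lab_f inE.
move=> [v [e [f [a [b [c [l [ve [vf [lab_e [lab_f abc]]]]]]]]]]]; exists v.
suff abc_v t : t \in [set i; j; l] -> t \in A v by rewrite !abc_v // !inE eqxx ?orbT.
rewrite -abc !inE => /orP[/orP[]|] t_abc.
- by apply: mem_appears_at ve _; rewrite lab_e inE.
- by apply: mem_appears_at vf _; rewrite lab_f !inE t_abc.
- by apply: mem_appears_at vf _; rewrite lab_f !inE t_abc orbT.
Qed.

Lemma inl_diff_adjacent_idx v e f i j b c :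
  e \in edges_at adj v -> f \in edges_at adj v ->
  lab e = inl i -> lab f = inr (b, c) -> j \in [set b; c] -> adjacent_idx i j.
Proof.
move=> ve vf lab_e lab_f /set2P[->|->]; right.
  by exists v, e, f, i, b, c, c.
by exists v, e, f, i, b, c, b; rewrite -setUA (setUC [set b]) setUA.
Qed.

Lemma appears_adjacent_idx v i j :
  i != j -> i \in A v -> j \in A v -> adjacent_idx i j.
Proof.
move=> neq_ij i_v j_v; have [dv|dv] := eqVneq (deg v) 3%N.
  have [a [b [_ labels_v]]] := lab_adm.1 v dv.
  have [e ve lab_e] := deg3_inl_edge labels_v (appears_at_deg3 labels_v i_v).
  have [f vf lab_f] := deg3_inl_edge labels_v (appears_at_deg3 labels_v j_v).
  by left; exists v, e, f.
have [e ve i_e] := bigcupP i_v; have [f vf j_f] := bigcupP j_v.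
case lab_e: (lab e) i_e => [a|[b c]] /= i_e;
  case lab_f: (lab f) j_f => [a'|[b' c']] /= j_f.
- by move/set1P: i_e => ->; move/set1P: j_f => ->; left; exists v, e, f.
- by move/set1P: i_e => ->; apply: inl_diff_adjacent_idx ve vf lab_e lab_f j_f.
- by move/set1P: j_f => ->; apply/adjacent_idxC/(inl_diff_adjacent_idx vf ve lab_f lab_e).
have eq_ef := diff_edge_nondeg3_uniq dv ve vf lab_e lab_f.
move: lab_f j_f; rewrite -eq_ef lab_e => -[<- <-] j_bc.
have [w [vw dw _ _]] := diff_edge_nondeg3 dv ve lab_e.
have [a [g vg lab_g]] := nbr_deg3_inl_edge dv vw dw.
right; exists v, g, e, a, b, c, a; do !split => //.
rewrite -setUA (_ : [set b; c] = [set i; j]) 1?setUC //.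
by move: i_e j_bc neq_ij => /set2P[]-> /set2P[]->; rewrite ?eqxx // setUC.
Qed.

Lemma XX_in_ICG i j :
  i != j -> (forall v, in_Iv v ('X_i * 'X_j)) <-> ~ adjacent_idx i j.
Proof.
move=> neq_ij; split=> [inI /adjacent_idx_appears[v [i_v j_v]] | not_adj v].
  by case/XX_in_Iv: (inI v).
by apply/XX_in_Iv => -[i_v j_v]; apply/not_adj/(appears_adjacent_idx neq_ij i_v j_v).
Qed.

Lemma diff_diff_in_ICG i j p q :
  (exists e, e \in tedges adj /\ lab e = inr (i, j)) ->
  (exists f, f \in tedges adj /\ lab f = inr (p, q)) -> (i, j) != (p, q) ->
  forall u, in_Iv u (('X_i - 'X_j) * ('X_p - 'X_q)).
Proof.
move=> [e [te lab_e]] [f [tf lab_f]] neq_ijpq u.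
have [v1 [dv1 _ _ labels_v1]] := diff_label_deg3 te lab_e.
have [v2 [dv2 _ _ labels_v2]] := diff_label_deg3 tf lab_f.
have neq_v12 : v1 != v2.
  apply: contraNneq neq_ijpq => eq_v12.
  have : inr (i, j) \in labels_at v2 by rewrite -eq_v12 labels_v1 !inE eqxx orbT.
  by rewrite labels_v2 !inE => /orP[/orP[]|] /eqP[] // -> ->.
have [ij_u|/norP[i_u j_u]] := boolP ((i \in A u) || (j \in A u)); last first.
  exact/in_idealMr/diff_in_Iv.
have [pq_u|/norP[p_u q_u]] := boolP ((p \in A u) || (q \in A u)); last first.
  exact/in_idealMl/diff_in_Iv.
case/eqP: neq_v12; apply: (deg3_close_uniq dv1 dv2).
  exact: deg3_index_near dv1 labels_v1 u ij_u.
exact: deg3_index_near dv2 labels_v2 u pq_u.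
Qed.

End AdmissibleLabeling.

Theorem proposition1p8 (k : closedFieldType) (V : finType) (adj : rel V)
    (n : nat) (lab : {set V} -> label n.+1) :
  [pchar k] =i pred0 ->
  connected_graph adj ->
  simple_graph adj ->
  degree_condition adj ->
  deg3_far_apart adj ->
  triangle_free adj ->
  n = (#|V| - genus adj)%N ->
  admissible adj lab ->
  [/\
   (* (1) *)
   (forall i j : 'I_n.+1, i != j ->
      (in_ICG k adj lab ('X_i * 'X_j) <->
       ~ ((exists v e f, e \in edges_at adj v /\ f \in edges_at adj v /\
              lab e = inl i /\ lab f = inl j) \/
          (exists v e f (a b c l : 'I_n.+1),
              e \in edges_at adj v /\ f \in edges_at adj v /\
              lab e = inl a /\ lab f = inr (b, c) /\
              [set a; b; c] = [set i; j; l])))),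
   (* (2) *)
   (forall i j l : 'I_n.+1, (exists f, f \in tedges adj /\ lab f = inr (j, l)) ->
      i \notin [set j; l] ->
      (in_ICG k adj lab ('X_i * ('X_j - 'X_l)) <->
       ~ (exists v e f, e \in edges_at adj v /\ f \in edges_at adj v /\
              lab e = inl i /\ (lab f = inl j \/ lab f = inl l))))
   &
   (* (3) *)
   (forall i j p q : 'I_n.+1,
      (exists e, e \in tedges adj /\ lab e = inr (i, j)) ->
      (exists f, f \in tedges adj /\ lab f = inr (p, q)) ->
      (i, j) != (p, q) ->
      in_ICG k adj lab (('X_i - 'X_j) * ('X_p - 'X_q)))].
Proof.
(* Characteristic zero, connectedness, triangle-freeness and the value of n
   play no role. *)
move=> _ _ adj_simple deg_cond deg3_far _ _ lab_adm; split.
- exact: XX_in_ICG.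
- move=> i j l [f [tf lab_f]] i_jl.
  have [v [dv _ neq_jl labels_v]] := diff_label_deg3 lab_adm tf lab_f.
  exact: (X_diff_in_ICG k adj_simple deg3_far lab_adm dv labels_v i_jl neq_jl).
- exact: diff_diff_in_ICG.
Qed.
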